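(* For every $n\ge 1$, the map $\Phi=\varphi\circ\Theta$ described below is a bijection from the set of reduced plane trees with $n+1$ leaves onto the set of parking quasi-ribbons of length $n$. (i) Binary trees: a binary tree is either empty or a node with an ordered pair (left subtree, right subtree) of binary trees; $|T|$ is its number of nodes. Define a word $\varphi(T)$ of length $|T|$, each letter being attached to one node: $\varphi(\emptyset)$ is the empty word, and if $T$ has left subtree $T_1$ and right subtree $T_2$, then $$\varphi(T)=\varphi(T_2)\cdot\big(\varphi(T_1)[M-1]\big)\cdot(|T_1|+M),$$ where $M$ is the largest letter of $\varphi(T_2)$ if $T_2\neq\emptyset$ and $M=1$ if $T_2=\emptyset$, $w[k]$ denotes the word obtained by adding $k$ to every letter of $w$, the dot is concatenation, and the final letter $|T_1|+M$ is attached to the root of $T$ (the letters of the first two blocks being attached to the nodes of $T_2$ and $T_1$ as in the recursive construction). (ii) Marked binary trees: a binary tree in which each edge joining a node to its left child is either normal or marked. For such a tree, $\varphi$ of the underlying binary tree is computed, and a bar is inserted immediately before the letter attached to each node whose left edge is marked. (iii) The map $\Theta$ from reduced plane trees to marked binary trees is defined recursively: the single-leaf tree goes to the empty tree; if the root has exactly two children subtrees $T_1,T_2$, $\Theta$ gives a node with left subtree $\Theta(T_1)$ and right subtree $\Theta(T_2)$, the left edge (if any) being normal; if the root has children subtrees $T_1,\dots,T_r$ with $r\ge3$, $\Theta$ gives a node with right subtree $\Theta(T_r)$ and left subtree $\Theta(T')$, joined by a marked left edge, where $T'$ is the tree whose root has children subtrees $T_1,\dots,T_{r-1}$.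
   Context: A reduced plane tree is a rooted plane tree in which every internal vertex has at least two children. A nondecreasing parking function of length $n$ is a word $a_1a_2\cdots a_n$ of positive integers with $a_1\le a_2\le\cdots\le a_n$ and $a_i\le i$ for all $i$. A parking quasi-ribbon of length $n$ is a nondecreasing parking function of length $n$ together with a (possibly empty) set of bars placed between some consecutive letters $a_i,a_{i+1}$, only at positions where $a_i<a_{i+1}$ (for example $11|244|5566|8$). *)

From mathcomp Require Import all_boot.
Set Implicit Arguments. Unset Strict Implicit. Unset Printing Implicit Defensive.

Inductive ptree := PNode of seq ptree.

Fixpoint leaves (t : ptree) : nat :=
  let: PNode ch := t in
  let fix sumL (s : seq ptree) : nat :=
    match s with [::] => 0 | c :: s' => leaves c + sumL s' end in
  if ch is [::] then 1 else sumL ch.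

Fixpoint reduced (t : ptree) : bool :=
  let: PNode ch := t in
  let fix allR (s : seq ptree) : bool :=
    match s with [::] => true | c :: s' => reduced c && allR s' end in
  ((size ch == 0) || (1 < size ch)) && allR ch.

(* Marked binary trees: [BNode m l r] is a node with left subtree [l],
   right subtree [r]; [m] = true iff the edge to the left child is marked. *)
Inductive btree := BEmpty | BNode of bool & btree & btree.

Fixpoint bsize (t : btree) : nat :=
  match t with BEmpty => 0 | BNode _ l r => (bsize l + bsize r).+1 end.

(* For children T1,...,Tr (r >= 2) this gives
   node(true, ... node(true, node(false, Th T1, Th T2), Th T3) ..., Th Tr),
   which is exactly the recursive definition of the paper unfolded. *)
Fixpoint theta (t : ptree) : btree :=
  let: PNode ch := t in
  let fix aux (acc : btree) (rest : seq ptree) : btree :=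
    match rest with
    | [::] => acc
    | c :: rest' => aux (BNode true acc (theta c)) rest'
    end in
  match ch with
  | t1 :: t2 :: rest => aux (BNode false (theta t1) (theta t2)) rest
  | _ => BEmpty
  end.

(* A quasi-ribbon word: letters paired with a boolean saying whether a bar
   is placed immediately before that letter. *)
Definition qword := seq (nat * bool).

(* phi on marked binary trees: the letter attached to each node comes with
   the mark of its left edge (bar inserted before it iff marked). *)
Fixpoint phi (t : btree) : qword :=
  match t with
  | BEmpty => [::]
  | BNode m l r =>
      let w2 := phi r in
      let w1 := phi l in
      let M := if w2 is [::] then 1 else \max_(x <- unzip1 w2) x in
      w2 ++ [seq (x.1 + (M - 1), x.2) | x <- w1] ++ [:: (bsize l + M, m)]
  end.

Definition Phi (t : ptree) : qword := phi (theta t).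

(* Parking quasi-ribbons of length n (letters a_1..a_n stored at indices
   0..n-1; bar before letter of index i allowed only for i > 0 with
   a_{i-1} < a_i). *)
Definition parking_quasi_ribbon (n : nat) (q : qword) : Prop :=
  let w := unzip1 q in
  let b := unzip2 q in
  [/\ size q = n,
      sorted leq w,
      (forall i, i < n -> 1 <= nth 0 w i <= i.+1)
    & (forall i, i < n -> nth false b i -> 0 < i /\ nth 0 w i.-1 < nth 0 w i)].

From mathcomp Require Import all_boot zify.
Set Implicit Arguments. Unset Strict Implicit. Unset Printing Implicit Defensive.

(** The word [phi T] is a shift of [phib 1 T], where [phib b] builds the
right block above the base [b] and the left block above the last letter [M]
of the right block; in particular the maximum [M] in the definition of [phi]
is that last letter.  The words [phib b T] are quasi-ribbons above [b]:
nondecreasing, at least [b], with [i]-th letter at most [b + i], and a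
barred letter exceeds its predecessor exactly when the marked left subtree
is nonempty.  Conversely the last (root) letter of a quasi-ribbon determines
where the remaining prefix splits into the two blocks, since a quasi-ribbon
of length [s] above [p] ends strictly below [p + s].  So [phib b] is a
bijection from binary trees whose marked left edges lead to nonempty
subtrees onto quasi-ribbons above [b], and Theta is a bijection from reduced
plane trees with [n + 1] leaves onto such trees with [n] nodes, its inverse
peeling the last child off the root along each marked left edge. *)

Definition last_letter (p : nat) (q : qword) : nat := last p (unzip1 q).

Fixpoint qribbon (strict : bool) (bound prev : nat) (q : qword) : bool :=
  match q with
  | [::] => true
  | (x, m) :: q' =>
      [&& prev <= x, x <= bound, (strict && m) ==> (prev < x)
        & qribbon strict bound.+1 x q']
  end.

Section QuasiRibbons.
Variable strict : bool.

Lemma last_letter_cat p s1 s2 :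
  last_letter p (s1 ++ s2) = last_letter (last_letter p s1) s2.
Proof. by rewrite /last_letter /unzip1 map_cat last_cat. Qed.

Lemma last_letter1 p x (m : bool) : last_letter p [:: (x, m)] = x.
Proof. by []. Qed.

Lemma qribbon_cat k p s1 s2 :
  qribbon strict k p (s1 ++ s2) =
  qribbon strict k p s1 && qribbon strict (k + size s1) (last_letter p s1) s2.
Proof.
elim: s1 k p => [|[x m] s1 IH] k p /=; first by rewrite addn0.
by rewrite IH addSnnS !andbA.
Qed.

Lemma qribbon1 k p x m :
  qribbon strict k p [:: (x, m)] = [&& p <= x, x <= k & (strict && m) ==> (p < x)].
Proof. by rewrite /= andbT. Qed.

Lemma qribbon_widen k k' p s :
  k <= k' -> qribbon strict k p s -> qribbon strict k' p s.
Proof.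
elim: s k k' p => [|[x m] s IH] k k' p //= le_kk' /and4P[-> le_xk -> qs].
by rewrite (leq_trans le_xk le_kk') (IH k.+1).
Qed.

Lemma last_letter_lt k p s :
  qribbon strict k p s -> 0 < size s -> last_letter p s < k + size s.
Proof.
elim: s k p => [|[x m] s IH] k p //= /and4P[_ le_xk _ qs] _.
case: s IH qs => [|y s] IH qs; first by rewrite /last_letter /= addn1.
by have := IH _ _ qs isT; rewrite /last_letter /= addSnnS.
Qed.

Lemma last_letter_le k p s :
  qribbon strict k p s -> p <= k -> last_letter p s <= k + size s.
Proof.
case: s => [|y s] qs le_pk; first by rewrite addn0.
exact/ltnW/(last_letter_lt qs).
Qed.

Lemma last_letter_ge k p s : qribbon strict k p s -> p <= last_letter p s.
Proof.
elim: s k p => [|[x m] s IH] k p //= /and4P[le_px _ _ qs].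
exact: leq_trans le_px (IH _ _ qs).
Qed.

Lemma qribbon_all_ge k p s : qribbon strict k p s -> all (leq p) (unzip1 s).
Proof.
elim: s k p => [|[x m] s IH] k p //= /and4P[le_px _ _ qs].
by rewrite le_px; apply: sub_all (IH _ _ qs) => y; apply: leq_trans.
Qed.

Lemma big_max_qribbon k p s :
  qribbon strict k p s -> 0 < size s -> \max_(x <- unzip1 s) x = last_letter p s.
Proof.
elim: s k p => [|[x m] s IH] k p //= /and4P[_ _ _ qs] _.
rewrite big_cons; case: s IH qs => [|y s] IH qs; first by rewrite big_nil maxn0.
by rewrite (IH _ _ qs isT); apply/maxn_idPr; apply: last_letter_ge qs.
Qed.

Lemma qribbon_split b u L :
  qribbon strict b b u -> last_letter b u <= L -> L <= b + size u ->
  exists u1 u2, [/\ u = u1 ++ u2,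
    qribbon strict (last_letter b u1) (last_letter b u1) u2
    & size u2 + last_letter b u1 = L].
Proof.
elim/last_ind: u L => [|u [a m] IH] L.
  move=> _ le_bL le_Lb; exists [::], [::]; split => //.
  by rewrite /last_letter /= addn0 in le_bL le_Lb *; lia.
rewrite -cats1 qribbon_cat qribbon1 last_letter_cat last_letter1 size_cat addn1.
move=> /andP[qu /and3P[le_ua le_ab bar_a]] le_aL le_Lb.
have [->|ne_aL] := eqVneq a L.
  by exists (u ++ [:: (L, m)]), [::]; rewrite cats0 last_letter_cat.
have [u1 [u2 [eu q2 s2]]] := IH L.-1 qu ltac:(lia) ltac:(lia).
rewrite eu last_letter_cat in le_ua bar_a.
exists u1, (u2 ++ [:: (a, m)]); rewrite eu catA qribbon_cat q2 qribbon1 size_cat.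
by rewrite le_ua bar_a /=; split => //; lia.
Qed.

Lemma qribbon_split_uniq_le b w2 w1 w2' w1' :
  qribbon strict (last_letter b w2) (last_letter b w2) w1 ->
  w2 ++ w1 = w2' ++ w1' ->
  size w1 + last_letter b w2 = size w1' + last_letter b w2' ->
  size w2 <= size w2' -> w2 = w2'.
Proof.
move=> q1 e es le_s.
set d := size w2' - size w2.
have ew2' : w2' = w2 ++ take d w1.
  by move: (take_size_cat w1' (erefl (size w2'))); rewrite -e take_cat ltnNge le_s.
have ew1' : w1' = drop d w1.
  by move: (drop_size_cat w1' (erefl (size w2'))); rewrite -e drop_cat ltnNge le_s.
have [d0|d_gt0] := posnP d; first by rewrite ew2' d0 take0 cats0.
have le_d : d <= size w1 by move/(f_equal size): e; rewrite !size_cat /d; lia.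
have sz_d : size (take d w1) = d by apply: size_takel.
move: q1; rewrite -(cat_take_drop d w1) qribbon_cat => /andP[/last_letter_lt].
rewrite sz_d => /(_ d_gt0) /=.
by move: es; rewrite ew1' ew2' size_drop last_letter_cat; lia.
Qed.

Lemma qribbon_split_uniq b w2 w1 w2' w1' :
  qribbon strict (last_letter b w2) (last_letter b w2) w1 ->
  qribbon strict (last_letter b w2') (last_letter b w2') w1' ->
  w2 ++ w1 = w2' ++ w1' ->
  size w1 + last_letter b w2 = size w1' + last_letter b w2' -> w2 = w2'.
Proof.
move=> q1 q1' e es; have [le_s|/ltnW le_s] := leqP (size w2) (size w2').
  exact: qribbon_split_uniq_le q1 e es le_s.
exact/esym/(qribbon_split_uniq_le q1' (esym e) (esym es) le_s).
Qed.

Lemma qribbon_nthP k p q :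
  reflect (forall i, i < size q ->
    [/\ nth p (p :: unzip1 q) i <= nth 0 (unzip1 q) i, nth 0 (unzip1 q) i <= k + i
      & (strict && nth false (unzip2 q) i) ==>
        (nth p (p :: unzip1 q) i < nth 0 (unzip1 q) i)])
    (qribbon strict k p q).
Proof.
elim: q k p => [|[x m] q IH] k p /=; first by apply: ReflectT.
have prevE i : i < size q -> nth p (x :: unzip1 q) i = nth x (x :: unzip1 q) i.
  by move=> lt_iq; apply: set_nth_default; rewrite /= size_map ltnW.
apply: (iffP and4P).
- move=> [le_px le_xk bar_x /IH qs] [|i] /=; first by rewrite addn0.
  by rewrite ltnS => lt_iq; rewrite prevE // -addSnnS; apply: qs.
- move=> H; have [] := H 0 isT; rewrite addn0 /= => -> -> ->; split=> //.
  by apply/IH => i lt_iq; have := H i.+1 lt_iq; rewrite /= prevE // addSnnS.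
Qed.

End QuasiRibbons.

Lemma parking_quasi_ribbonP n q :
  parking_quasi_ribbon n q <-> size q = n /\ qribbon true 1 1 q.
Proof.
rewrite /parking_quasi_ribbon; split.
- case=> sz_q sorted_q letter_q bar_q; split => //.
  apply/qribbon_nthP => i lt_iq; rewrite sz_q in lt_iq.
  have /andP[ge1 le_i] := letter_q i lt_iq; rewrite add1n le_i.
  case: i lt_iq ge1 le_i => [|i] lt_iq ge1 le_i.
    by rewrite ge1; split => //; apply/implyP => /(bar_q 0 lt_iq) [].
  have prevE : nth 1 (1 :: unzip1 q) i.+1 = nth 0 (unzip1 q) i.
    by rewrite /= (set_nth_default 0) // size_map sz_q ltnW.
  rewrite prevE; split => //; last by apply/implyP => /(bar_q _ lt_iq) [].
  by apply: (sortedP 0 sorted_q); rewrite size_map sz_q.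
- case=> sz_q qs; have /qribbon_nthP H := qs; split => //.
  + apply/(sortedP 0) => i; rewrite size_map => lt_iq.
    have [] := H i.+1 lt_iq; rewrite /= (set_nth_default 0 1) //.
    by rewrite size_map ltnW.
  + move=> i lt_iq; rewrite -sz_q in lt_iq; have [_ -> _] := H i lt_iq.
    rewrite andbT; move/all_nthP: (qribbon_all_ge qs).
    by apply; rewrite size_map.
  + move=> i lt_iq bar_i; rewrite -sz_q in lt_iq; have [_ le_i] := H i lt_iq.
    rewrite bar_i /=; case: i lt_iq bar_i le_i => [|i] lt_iq _ /=; first lia.
    by rewrite (set_nth_default 0 1) // size_map ltnW.
Qed.

Definition shiftq (k : nat) (q : qword) : qword := [seq (x.1 + k, x.2) | x <- q].

Lemma shiftq0 q : shiftq 0 q = q.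
Proof. by elim: q => //= [[x m] q ->]; rewrite addn0. Qed.

Lemma shiftq_cat k q1 q2 : shiftq k (q1 ++ q2) = shiftq k q1 ++ shiftq k q2.
Proof. exact: map_cat. Qed.

Lemma shiftqD j k q : shiftq k (shiftq j q) = shiftq (j + k) q.
Proof. by rewrite /shiftq -map_comp; apply: eq_map => -[x m]; rewrite /= addnA. Qed.

Lemma last_letter_shiftq p k q :
  last_letter (p + k) (shiftq k q) = last_letter p q + k.
Proof. by case/lastP: q => [|q x]; rewrite /last_letter /unzip1 /shiftq ?map_rcons ?last_rcons. Qed.

Fixpoint phib (b : nat) (t : btree) : qword :=
  match t with
  | BEmpty => [::]
  | BNode m l r =>
      let w2 := phib b r in
      let M := last_letter b w2 in
      w2 ++ phib M l ++ [:: (bsize l + M, m)]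
  end.

Fixpoint well_marked (t : btree) : bool :=
  match t with
  | BEmpty => true
  | BNode m l r => [&& m ==> (0 < bsize l), well_marked l & well_marked r]
  end.

Lemma size_phib b t : size (phib b t) = bsize t.
Proof.
elim: t b => [|m l IHl r IHr] b //=.
by rewrite !size_cat IHl IHr /= addn1 addnC.
Qed.

Lemma phib_qribbon strict b t :
  strict ==> well_marked t -> qribbon strict b b (phib b t).
Proof.
elim: t b => [|m l IHl r IHr] b //= wm.
have [bar_l wm_l wm_r] :
    [/\ strict && m ==> (0 < bsize l), strict ==> well_marked l
      & strict ==> well_marked r].
  by case: (strict) wm => //= /and3P[].
have q2 := IHr b wm_r; set M := last_letter b (phib b r).
have q1 := IHl M wm_l.
have le_M : M <= b + size (phib b r) by apply: last_letter_le q2 _.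
have le_L := last_letter_le q1 (leqnn M).
rewrite qribbon_cat q2 qribbon_cat (qribbon_widen le_M q1) qribbon1 /= -/M.
rewrite !size_phib in le_M le_L *; apply/and3P; split; [lia|lia|].
apply/implyP => /(implyP bar_l) l_gt0.
by have := last_letter_lt q1; rewrite size_phib => /(_ l_gt0); lia.
Qed.

Lemma phib_inj b t t' :
  well_marked t -> well_marked t' -> phib b t = phib b t' -> t = t'.
Proof.
elim: t t' b => [|m l IHl r IHr] [|m' l' r'] b //=;
  try by move=> _ _ /(f_equal size); rewrite !size_cat /=; lia.
move=> /and3P[_ wm_l wm_r] /and3P[_ wm_l' wm_r'].
rewrite !catA !cats1 => /rcons_inj [e2 eL ->].
have er : phib b r = phib b r'.
  apply: (qribbon_split_uniq (strict := true) _ _ e2);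
    try by apply: phib_qribbon.
  by rewrite !size_phib.
rewrite -(IHr r' b wm_r wm_r' er); congr BNode.
by move/(f_equal (drop (size (phib b r)))): e2; rewrite er !drop_size_cat //; apply: IHl.
Qed.

Lemma phib_surj b q :
  qribbon true b b q -> exists2 t, well_marked t & phib b t = q.
Proof.
have [n] := ubnP (size q); elim: n b q => // n IH b q.
case/lastP: q => [|u [L m]] lt_qn; first by exists BEmpty.
rewrite -cats1 qribbon_cat qribbon1 => /andP[qu /and3P[le_uL le_Lb bar_L]].
have [u1 [u2 [eu q2 s2]]] := qribbon_split qu le_uL le_Lb.
have q1 : qribbon true b b u1 by move: qu; rewrite eu qribbon_cat => /andP[].
rewrite size_rcons eu size_cat in lt_qn.
have [r wm_r er] := IH b u1 ltac:(lia) q1.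
have [l wm_l el] := IH _ u2 ltac:(lia) q2.
have sz_l : bsize l = size u2 by rewrite -(size_phib (last_letter b u1)) el.
exists (BNode m l r); last by rewrite /= er el sz_l s2 eu catA.
rewrite /= wm_l wm_r andbT; case: m bar_L => //= bar_L.
rewrite sz_l lt0n size_eq0 andbT; apply: contraTneq bar_L => u2_0.
by move: s2; rewrite eu u2_0 cats0 add0n => ->; rewrite ltnn.
Qed.

Lemma phi_shiftq k t : shiftq k (phi t) = phib k.+1 t.
Proof.
elim: t k => [|m l IHl r IHr] k //=.
have er : phi r = phib 1 r by rewrite -(IHr 0) shiftq0.
have q_r := phib_qribbon (strict := false) (t := r) 1 isT.
set M := (if phi r is [::] then 1 else _).
have eM : M = last_letter 1 (phib 1 r).
  rewrite /M er; case E: (phib 1 r) => [|y s] //.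
  by rewrite -E (big_max_qribbon q_r) // E.
have M_gt0 : 0 < M by rewrite eM; apply: last_letter_ge q_r.
have eM' : last_letter k.+1 (phib k.+1 r) = M + k.
  by rewrite -IHr -add1n last_letter_shiftq eM er.
rewrite eM' -/(shiftq (M - 1) (phi l)) !shiftq_cat IHr shiftqD IHl /=.
by rewrite -addnA -addSn subn1 prednK.
Qed.

Lemma Phi_phib T : Phi T = phib 1 (theta T).
Proof. by rewrite /Phi -phi_shiftq shiftq0. Qed.

Lemma leavesE ch :
  leaves (PNode ch) = if ch is [::] then 1 else sumn (map leaves ch).
Proof. by case: ch => //= c s; congr (_ + _); elim: s => //= c' s ->. Qed.

Lemma reducedE ch :
  reduced (PNode ch) = ((size ch == 0) || (1 < size ch)) && all reduced ch.
Proof. by rewrite /=; congr (_ && _); elim: ch => //= c s ->. Qed.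

Lemma leaves_rcons ch c : 0 < size ch ->
  leaves (PNode (rcons ch c)) = leaves (PNode ch) + leaves c.
Proof.
by case: ch => // t ch _; rewrite !leavesE rcons_cons -rcons_cons map_rcons sumn_rcons.
Qed.

Fixpoint theta_comb (acc : btree) (rest : seq ptree) : btree :=
  if rest is c :: rest' then theta_comb (BNode true acc (theta c)) rest' else acc.

Lemma thetaE t1 t2 rest :
  theta (PNode [:: t1, t2 & rest]) =
  theta_comb (BNode false (theta t1) (theta t2)) rest.
Proof. by []. Qed.

Lemma theta_comb_rcons acc rest c :
  theta_comb acc (rcons rest c) = BNode true (theta_comb acc rest) (theta c).
Proof. by elim: rest acc => //= c' rest IH acc; rewrite IH. Qed.

Lemma theta_rcons ch c : 1 < size ch ->
  theta (PNode (rcons ch c)) = BNode true (theta (PNode ch)) (theta c).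
Proof.
by case: ch => [|t1 [|t2 ch]] // _; rewrite !rcons_cons !thetaE theta_comb_rcons.
Qed.

Lemma bsize_theta_gt0 ch : 1 < size ch -> 0 < bsize (theta (PNode ch)).
Proof.
case: ch => [|t1 [|t2 ch]] // _; case/lastP: ch => [|ch c] //.
by rewrite -!rcons_cons theta_rcons.
Qed.

Lemma theta_cases ch : reduced (PNode ch) ->
  [\/ ch = [::] /\ theta (PNode ch) = BEmpty,
      exists t1 t2, [/\ ch = [:: t1; t2], reduced t1, reduced t2
                      & theta (PNode ch) = BNode false (theta t1) (theta t2)]
    | exists ch' c, [/\ ch = rcons ch' c, 1 < size ch', reduced (PNode ch'), reduced c
                      & theta (PNode ch) = BNode true (theta (PNode ch')) (theta c)]].
Proof.
case: ch => [|t1 [|t2 rest]]; rewrite reducedE //; first by move=> _; apply: Or31.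
move=> /andP[_ red_ch]; have /and3P[red1 red2 _] := red_ch.
case/lastP: rest red_ch => [_|rest c red_ch]; first by apply: Or32; exists t1, t2.
apply: Or33; exists [:: t1, t2 & rest], c.
move: red_ch; rewrite -!rcons_cons all_rcons => /andP[red_c red_ch].
by rewrite reducedE red_ch theta_rcons.
Qed.

(* Induction following the paper's recursive definition of Theta. *)
Lemma reduced_ind (P : ptree -> Prop) :
  P (PNode [::]) ->
  (forall t1 t2, reduced t1 -> reduced t2 -> P t1 -> P t2 -> P (PNode [:: t1; t2])) ->
  (forall ch c, 1 < size ch -> reduced (PNode ch) -> reduced c ->
     P (PNode ch) -> P c -> P (PNode (rcons ch c))) ->
  forall T, reduced T -> P T.
Proof.
move=> P_leaf P_pair P_rcons T; move e: (theta T) => t.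
elim: t T e => [|m l IHl r IHr] [ch] e red;
  case: (theta_cases red) e => [[-> _]|[t1 [t2 [-> red1 red2 ->]]]|[ch' [c [-> s red' red_c ->]]]] //.
- by case=> _ e1 e2; apply: P_pair red1 red2 (IHl _ e1 red1) (IHr _ e2 red2).
- by case=> _ e1 e2; apply: (P_rcons _ _ s red' red_c (IHl (PNode ch') e1 red') (IHr c e2 red_c)).
Qed.

Lemma theta_well_marked_size T :
  reduced T -> well_marked (theta T) /\ (bsize (theta T)).+1 = leaves T.
Proof.
elim/reduced_ind => // [t1 t2 _ _ [wm1 sz1] [wm2 sz2]|ch c s _ _ [wm sz] [wm_c sz_c]].
  by rewrite /= wm1 wm2 -sz1 -sz2; split => //; lia.
rewrite theta_rcons // leaves_rcons ?(ltnW s) // -sz -sz_c addSn addnS.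
by split => //; apply/and3P; split=> //; apply: bsize_theta_gt0.
Qed.

Fixpoint untheta (t : btree) : ptree :=
  match t with
  | BEmpty => PNode [::]
  | BNode false l r => PNode [:: untheta l; untheta r]
  | BNode true l r => let: PNode ch := untheta l in PNode (rcons ch (untheta r))
  end.

Lemma thetaK T : reduced T -> untheta (theta T) = T.
Proof.
elim/reduced_ind => // [t1 t2 _ _ /= -> -> //|ch c s _ _ IH IHc].
by rewrite theta_rcons //= IH IHc.
Qed.

Lemma untheta_reducedK t :
  well_marked t -> reduced (untheta t) /\ theta (untheta t) = t.
Proof.
elim: t => [|m l IHl r IHr] //= /and3P[mark_l /IHl[red_l el] /IHr[red_r er]].
case: m mark_l => /= [l_gt0|_]; last by rewrite red_l red_r el er.
case: (untheta l) red_l el => ch red_l el.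
have size_ch : 1 < size ch.
  move: red_l; rewrite reducedE => /andP[/orP[/eqP/size0nil ch0|//] _].
  by move: l_gt0; rewrite -el ch0.
split; last by rewrite theta_rcons // el er.
move: red_l; rewrite !reducedE size_rcons all_rcons red_r ltnS (ltnW size_ch).
by rewrite orbT => /andP[].
Qed.

Theorem mainTheorem3 (n : nat) : 1 <= n ->
  [/\ (forall T : ptree, reduced T -> leaves T = n.+1 ->
         parking_quasi_ribbon n (Phi T)),
      (forall T1 T2 : ptree, reduced T1 -> reduced T2 ->
         leaves T1 = n.+1 -> leaves T2 = n.+1 -> Phi T1 = Phi T2 -> T1 = T2)
    & (forall q : qword, parking_quasi_ribbon n q ->
         exists T : ptree, [/\ reduced T, leaves T = n.+1 & Phi T = q])].
Proof.
move=> _; split.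
- move=> T red leaves_T; have [wm sz] := theta_well_marked_size red.
  apply/parking_quasi_ribbonP; rewrite Phi_phib size_phib phib_qribbon //.
  by split => //; apply: succn_inj; rewrite sz.
- move=> T1 T2 red1 red2 _ _; rewrite !Phi_phib => e.
  have [[wm1 _] [wm2 _]] := (theta_well_marked_size red1, theta_well_marked_size red2).
  by rewrite -(thetaK red1) -(thetaK red2) (phib_inj wm1 wm2 e).
- move=> q /parking_quasi_ribbonP [<- /phib_surj [t wm <-]].
  have [red e] := untheta_reducedK wm.
  exists (untheta t); rewrite Phi_phib e size_phib; split => //.
  by have [_ <-] := theta_well_marked_size red; rewrite e.
Qed.
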